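(* For all $a,b\ge2$: $D_2(a,b)=\binom{a}{2}\binom{b}{2}$; $D_3(2,b)=2\binom{b}{3}$; and $D_4(2,b)=3\binom{b}{3}+9\binom{b}{4}$.
   Context: A grid-labelled graph of type $(a,b)$ is a simple graph whose vertex set is the grid $[a]\times[b]$. An edge $\{(i,j),(k,l)\}$ is diagonal if $i\neq k$ and $j\neq l$. The partial transpose $\Gamma(G)$ is the grid-labelled graph with edge set $\{\{(k,j),(i,l)\}:\{(i,j),(k,l)\}\in E(G)\}$; $G$ satisfies the degree criterion if every vertex has the same degree in $G$ and in $\Gamma(G)$. $D_k(a,b)$ is the number of grid-labelled graphs of type $(a,b)$ with exactly $k$ edges, all diagonal, that satisfy the degree criterion. *)

From mathcomp Require Import all_boot.
Set Implicit Arguments. Unset Strict Implicit. Unset Printing Implicit Defensive.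

(* Vertices of a grid-labelled graph of type (a,b): the grid [a] x [b],
   encoded as 'I_a * 'I_b (0-based). A graph is its edge set, a set of
   2-element subsets of the vertex set. *)
Definition vert (a b : nat) := ('I_a * 'I_b)%type.

Definition simple_graph a b (E : {set {set vert a b}}) : bool :=
  [forall e in E, #|e| == 2].

Definition diag_edge a b (e : {set vert a b}) : bool :=
  [exists p : vert a b, exists q : vert a b,
     [&& e == [set p; q], p.1 != q.1 & p.2 != q.2]].

(* partial transpose: {(i,j),(k,l)} in E gives edge {(k,j),(i,l)} *)
Definition ptrans a b (E : {set {set vert a b}}) : {set {set vert a b}} :=
  [set [set (x.2.1, x.1.2); (x.1.1, x.2.2)] | x : vert a b * vert a b
     & [set x.1; x.2] \in E].

Definition deg a b (E : {set {set vert a b}}) (v : vert a b) : nat :=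
  #|[set e in E | v \in e]|.

Definition degree_criterion a b (E : {set {set vert a b}}) : bool :=
  [forall v : vert a b, deg E v == deg (ptrans E) v].

Definition D (k a b : nat) : nat :=
  #|[set E : {set {set vert a b}} |
      [&& simple_graph E, #|E| == k, [forall e in E, diag_edge e]
        & degree_criterion E]]|.

(* A diagonal graph with two edges satisfies the degree criterion only if each edge meets the
   partial transpose of the other, which forces the two edges to be the diagonals
   {(i,j),(k,l)} and {(k,j),(i,l)} of a rectangle; a rectangle is a choice of two rows and two
   columns.

   With two rows, a diagonal edge {(1,x),(2,y)} is an arc x -> y with x <> y, and partial
   transposition reverses all arcs. So D_k(2,b) counts the loopless digraphs on [b] with k arcs
   in which every vertex has equal in- and out-degree. In such a digraph a vertex without
   outgoing arcs is isolated; sorting the digraphs by their set of non-isolated vertices gives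
   D_k(2,b) = sum_t C(b,t) c_k(t), where c_k(t) = [eul_full k t] counts those using all t
   vertices. Since c_k(t) = 0 for t > k, only finitely many values of c_3 and c_4 are needed,
   and they are computed by enumerating adjacency matrices. *)

From mathcomp Require Import all_boot zify.
Set Implicit Arguments. Unset Strict Implicit. Unset Printing Implicit Defensive.

Lemma set2_eq_cases (T : finType) (p q x y : T) : x != y ->
  [set p; q] = [set x; y] -> (p = x /\ q = y) \/ (p = y /\ q = x).
Proof.
move=> nxy Epq.
have: x \in [set p; q] by rewrite Epq set21.
have: y \in [set p; q] by rewrite Epq set22.
have: q \in [set x; y] by rewrite -Epq set22.
have: p \in [set x; y] by rewrite -Epq set21.
rewrite !inE => /orP[]/eqP E1 /orP[]/eqP E2 /orP[]/eqP E3 /orP[]/eqP E4;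
  subst; rewrite ?eqxx in nxy; auto.
Qed.

Lemma card_imset_sep (T U : finType) (f : T -> U) (A : {set T}) (P : pred U) :
  injective f -> #|[set y in f @: A | P y]| = #|[set x in A | P (f x)]|.
Proof.
move=> f_inj; rewrite -(card_imset _ f_inj); congr #|pred_of_set _|.
apply/setP => y; rewrite inE; apply/andP/imsetP => [[/imsetP[x Ax ->] Pfx]|[x]].
  by exists x; rewrite // inE Ax.
by rewrite inE => /andP[Ax Pfx] ->; split=> //; apply: imset_f.
Qed.

Lemma card_ltn_pairs n : #|[set x : 'I_n * 'I_n | x.1 < x.2]| = 'C(n, 2).
Proof.
rewrite -[in RHS](card_ord n) -card_draws.
have -> : [set A : {set 'I_n} | #|A| == 2] =
          [set [set x.1; x.2] | x in [set x : 'I_n * 'I_n | x.1 < x.2]].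
  apply/setP => A; rewrite inE; apply/cards2P/imsetP => [[x [y [nxy ->]]]|[[x y]]].
    case: (ltngtP x y) => [xy|yx|/val_inj exy]; last by rewrite exy eqxx in nxy.
      by exists (x, y); rewrite ?inE.
    by exists (y, x); rewrite ?inE //= setUC.
  rewrite inE /= => xy ->; exists x, y; split=> //.
  by apply: contraTneq xy => ->; rewrite ltnn.
apply/esym/card_in_imset => [[x1 x2] [y1 y2]]; rewrite !inE /= => lt_x lt_y.
have ny : y1 != y2 by apply: contraTneq lt_y => ->; rewrite ltnn.
case/(set2_eq_cases ny) => [[-> ->] //|[e1 e2]].
by move: lt_x; rewrite e1 e2 ltnNge (ltnW lt_y).
Qed.

Definition dgraph a b k (E : {set {set vert a b}}) : bool :=
  [&& simple_graph E, #|E| == k, [forall e in E, diag_edge e] & degree_criterion E].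

Lemma D_dgraph k a b : D k a b = #|[set E : {set {set vert a b}} | dgraph k E]|.
Proof. by []. Qed.

Lemma deg_gt0P a b (E : {set {set vert a b}}) v :
  reflect (exists2 e, e \in E & v \in e) (0 < deg E v).
Proof.
apply: (iffP card_gt0P) => [[e]|[e Ee ve]]; last by exists e; rewrite inE Ee.
by rewrite inE => /andP[]; exists e.
Qed.

Section Grid.
Variables a b : nat.
Notation V := (vert a b).

Definition tr_edge (p q : V) : {set V} := [set (q.1, p.2); (p.1, q.2)].

Lemma ptransP (E : {set {set V}}) e :
  reflect (exists p q, [set p; q] \in E /\ e = tr_edge p q) (e \in ptrans E).
Proof.
apply: (iffP imsetP) => [[[p q]]|[p [q [Epq ->]]]]; last by exists (p, q); rewrite ?inE.
by rewrite inE => Epq ->; exists p, q.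
Qed.

Lemma tr_edgeC p q : tr_edge p q = tr_edge q p.
Proof. exact: setUC. Qed.

Lemma tr_edge_set2 p q x y : x != y -> [set p; q] = [set x; y] ->
  tr_edge p q = tr_edge x y.
Proof. by move=> nxy /(set2_eq_cases nxy)[[-> ->]|[-> ->]] //; rewrite tr_edgeC. Qed.

Lemma tr_edgeK i j k l : tr_edge (k, j) (i, l) = [set (i, j); (k, l)].
Proof. by []. Qed.

Lemma pair_neq (i k : 'I_a) (j l : 'I_b) : i != k -> (i, j) != (k, l) :> V.
Proof. by apply: contra => /eqP[->]. Qed.

Lemma tr_edge_disjoint i j k l (v : V) : i != k -> j != l ->
  v \in [set (i, j); (k, l)] -> v \notin tr_edge (i, j) (k, l).
Proof.
move=> n1 n2; rewrite !inE => /orP[]/eqP->.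
all: rewrite !xpair_eqE !eqxx ?andbT ?andTb negb_or.
  by rewrite n1 n2.
by rewrite eq_sym n2 eq_sym n1.
Qed.

Definition rect (r : 'I_a * 'I_a) (c : 'I_b * 'I_b) : {set {set V}} :=
  [set [set (r.1, c.1); (r.2, c.2)]; tr_edge (r.1, c.1) (r.2, c.2)].

Lemma ptrans_rect r c : r.1 != r.2 -> ptrans (rect r c) = rect r c.
Proof.
move=> nr; have nr' : r.2 != r.1 by rewrite eq_sym.
apply/setP => e; apply/ptransP/idP => [[p [q [/set2P[] Epq ->]]]|].
- by rewrite (tr_edge_set2 (pair_neq c.1 c.2 nr) Epq) set22.
- by rewrite (tr_edge_set2 (pair_neq c.1 c.2 nr') Epq) tr_edgeK set21.
- case/set2P=> ->; first by exists (r.2, c.1), (r.1, c.2); rewrite tr_edgeK set22.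
  by exists (r.1, c.1), (r.2, c.2); rewrite set21.
Qed.

Lemma rect_dgraph r c : r.1 != r.2 -> c.1 != c.2 -> dgraph 2 (rect r c).
Proof.
move=> nr nc; have nr' : r.2 != r.1 by rewrite eq_sym.
apply/and4P; split.
- by apply/forall_inP => e /set2P[]->; rewrite cards2 pair_neq.
- rewrite cards2.
  suff -> : [set (r.1, c.1); (r.2, c.2)] != tr_edge (r.1, c.1) (r.2, c.2) by [].
  apply/eqP => Ee; have := tr_edge_disjoint nr nc (set21 (r.1, c.1) (r.2, c.2)).
  by rewrite -Ee set21.
- apply/forall_inP => e /set2P[]->; apply/existsP.
    by exists (r.1, c.1); apply/existsP; exists (r.2, c.2); rewrite /= eqxx nr nc.
  by exists (r.2, c.1); apply/existsP; exists (r.1, c.2); rewrite /= eqxx nr' nc.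
- by apply/forallP => v; rewrite ptrans_rect.
Qed.

Lemma rect_swapl r c : rect (r.2, r.1) c = rect r c.
Proof. by rewrite /rect /tr_edge /= setUC. Qed.

Lemma rect_swapr r c : rect r (c.2, c.1) = rect r c.
Proof. by rewrite /rect /tr_edge /= setUC; congr [set _; _]; apply: setUC. Qed.

Lemma rect_sorted r c : r.1 != r.2 -> c.1 != c.2 ->
  exists (r' : 'I_a * 'I_a) (c' : 'I_b * 'I_b),
    [/\ r'.1 < r'.2, c'.1 < c'.2 & rect r c = rect r' c'].
Proof.
move=> nr nc.
have [r' lt_r ->] : exists2 r' : 'I_a * 'I_a, r'.1 < r'.2 & rect r c = rect r' c.
  case: (ltngtP r.1 r.2) => [lt_r|gt_r|/val_inj er]; last by rewrite er eqxx in nr.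
    by exists r.
  by exists (r.2, r.1); rewrite ?rect_swapl.
case: (ltngtP c.1 c.2) => [lt_c|gt_c|/val_inj ec]; last by rewrite ec eqxx in nc.
  by exists r', c.
by exists r', (c.2, c.1); rewrite ?rect_swapr.
Qed.

Lemma dgraph2_rect E : dgraph 2 E ->
  exists r c, [/\ r.1 != r.2, c.1 != c.2 & E = rect r c].
Proof.
case/and4P=> simpleE /eqP cardE diagE critE.
have [e1 Ee1] : exists e1, e1 \in E by apply/card_gt0P; rewrite cardE.
have /existsP[[i j] /existsP[[k l] /and3P[/eqP De1 /= nik njl]]] := forall_inP diagE e1 Ee1.
subst e1.
have E_pair e : e \in E -> e != [set (i, j); (k, l)] -> E = [set [set (i, j); (k, l)]; e].
  move=> Ee ne; apply/eqP; rewrite eq_sym eqEcard cardE cards2 eq_sym ne andbT.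
  by apply/subsetP => e' /set2P[]->.
(* by the degree criterion, since the first edge misses its own transpose *)
have on_other v : v \in [set (i, j); (k, l)] -> exists x y,
    [/\ [set x; y] \in E, [set x; y] != [set (i, j); (k, l)] & v \in tr_edge x y].
  move=> ve1; have : 0 < deg E v by apply/deg_gt0P; exists [set (i, j); (k, l)].
  rewrite (eqP (forallP critE v)) => /deg_gt0P[_ /ptransP[x [y [Exy ->]]] vxy].
  exists x, y; split=> //; apply/eqP => Exy1; move: vxy.
  by rewrite (tr_edge_set2 (pair_neq j l nik) Exy1); apply/negP/tr_edge_disjoint.
have [x [y [Exy ne1 ij_xy]]] := on_other _ (set21 (i, j) (k, l)).
have [x' [y' [Exy' ne1' kl_xy']]] := on_other _ (set22 (i, j) (k, l)).
have nxy : x != y by have := forall_inP simpleE _ Exy; rewrite cards2; case: (x != y).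
have DE := E_pair _ Exy ne1.
have Exy'xy : [set x'; y'] = [set x; y].
  by move: Exy'; rewrite DE => /set2P[Exy'|//]; rewrite Exy' eqxx in ne1'.
rewrite (tr_edge_set2 nxy Exy'xy) in kl_xy'.
have tr_xy : tr_edge x y = [set (i, j); (k, l)].
  apply/eqP; rewrite eq_sym eqEcard (cards2 (i, j)) pair_neq //.
  apply/andP; split; first by apply/subsetP => v /set2P[]->.
  by rewrite cards2; case: (_ != _).
exists (i, k), (j, l); split=> //; rewrite DE /rect /=; congr [set _; _].
case: x y tr_xy {Exy ne1 ij_xy nxy DE Exy'xy kl_xy'} => [x1 x2] [y1 y2] tr_xy.
by rewrite -tr_edgeK; apply: tr_edge_set2 (pair_neq j l nik) tr_xy.
Qed.

Lemma rect_inj (r r' : 'I_a * 'I_a) (c c' : 'I_b * 'I_b) :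
  r.1 < r.2 -> c.1 < c.2 -> r'.1 < r'.2 -> c'.1 < c'.2 ->
  rect r c = rect r' c' -> r = r' /\ c = c'.
Proof.
case: r r' c c' => [r1 r2] [r1' r2'] [c1 c2] [c1' c2'] /= lr lc lr' lc' Erc.
have nr' : r1' != r2' by rewrite neq_ltn lr'.
have nr'' : r2' != r1' by rewrite neq_ltn lr' orbT.
have : [set (r1, c1); (r2, c2)] \in rect (r1', r2') (c1', c2') by rewrite -Erc set21.
case/set2P; [move/(set2_eq_cases (pair_neq c1' c2' nr'))
            | move/(set2_eq_cases (pair_neq c1' c2' nr''))].
all: case=> [] [[e1 e2] [e3 e4]]; subst => //.
all: by move: lr lc lr' lc'; lia.
Qed.

Lemma D2_eq : D 2 a b = 'C(a, 2) * 'C(b, 2).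
Proof.
rewrite D_dgraph -!card_ltn_pairs -cardsX.
set S := setX _ _.
have -> : [set E : {set {set vert a b}} | dgraph 2 E] = [set rect x.1 x.2 | x in S].
  apply/setP => E; rewrite inE; apply/idP/imsetP => [|[[r c]]].
    case/dgraph2_rect => r [c [nr nc ->]].
    by have [r' [c' [lr lc ->]]] := rect_sorted nr nc; exists (r', c'); rewrite ?inE /= ?lr.
  by rewrite !inE /= => /andP[lr lc] ->; rewrite rect_dgraph // neq_ltn ?lr ?lc.
apply: card_in_imset => [[r c] [r' c']]; rewrite !inE /= => /andP[lr lc] /andP[lr' lc'].
by move/(rect_inj lr lc lr' lc') => [-> ->].
Qed.

End Grid.

Section Digraphs.
Variable T : finType.
Implicit Types R : {set T * T}.

Definition outdeg R x := #|[set p in R | p.1 == x]|.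
Definition indeg R x := #|[set p in R | p.2 == x]|.

Definition eulerian k R :=
  [&& [forall x, (x, x) \notin R], #|R| == k & [forall x, outdeg R x == indeg R x]].

Definition swap (p : T * T) := (p.2, p.1).

Lemma swap_inj : injective swap.
Proof. by move=> [x1 x2] [y1 y2] [-> ->]. Qed.

Lemma outdeg_swap R x : outdeg (swap @: R) x = indeg R x.
Proof. exact: card_imset_sep swap_inj. Qed.

Lemma indeg_swap R x : indeg (swap @: R) x = outdeg R x.
Proof. exact: card_imset_sep swap_inj. Qed.

Lemma card_outdeg_sum R : #|R| = \sum_x outdeg R x.
Proof.
rewrite -sum1_card (partition_big fst xpredT) //.
by apply: eq_bigr => x _; rewrite sum1dep_card.
Qed.

Lemma outdeg_sum R x : outdeg R x = \sum_y ((x, y) \in R).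
Proof.
rewrite (eq_bigr (fun y => if (x, y) \in R then 1 else 0)) => [|y _]; last by case: (_ \in R).
rewrite /outdeg; have -> : [set p in R | p.1 == x] = pair x @: [set y | (x, y) \in R].
  apply/setP => -[x' y]; rewrite inE /=; apply/andP/imsetP => [[Rp /eqP Ex]|[y']].
    by exists y; rewrite ?inE -?Ex.
  by rewrite inE => Ry' [-> ->].
by rewrite -big_mkcond sum1dep_card card_imset ?cardsE // => ? ? [].
Qed.

Lemma indeg_sum R y : indeg R y = \sum_x ((x, y) \in R).
Proof.
rewrite -outdeg_swap outdeg_sum; apply: eq_bigr => x _.
by rewrite -[(y, x)]/(swap (x, y)) (mem_imset _ _ swap_inj).
Qed.

Lemma outdeg0P R x : reflect (forall p, p \in R -> p.1 != x) (outdeg R x == 0).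
Proof.
rewrite cards_eq0; apply: (iffP eqP) => [/setP R0 p Rp|R0].
  by apply/eqP => px; have := R0 p; rewrite !inE Rp px eqxx.
by apply/setP => p; rewrite !inE; case Rp: (p \in R) => //=; apply/negbTE/R0.
Qed.

Lemma indeg0P R x : reflect (forall p, p \in R -> p.2 != x) (indeg R x == 0).
Proof.
rewrite -outdeg_swap; apply: (iffP (outdeg0P _ _)) => [R0 p Rp|R0 _ /imsetP[p Rp ->]].
  exact: R0 (imset_f swap Rp).
exact: R0.
Qed.

End Digraphs.
Arguments swap {T}.

Lemma ord2P (i : 'I_2) : i = ord0 \/ i = ord_max.
Proof. by case: i => [[|[|?]] ?] //; [left | right]; apply: val_inj. Qed.

Section TwoRows.
Variable b : nat.
Notation V := (vert 2 b).
Implicit Types (R : {set 'I_b * 'I_b}) (E : {set {set V}}).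

Definition bridge (x : 'I_b * 'I_b) : {set V} := [set (ord0, x.1); (ord_max, x.2)].

Lemma ord0_max : (ord0 == ord_max :> 'I_2) = false.
Proof. by []. Qed.

Lemma mem_bridge0 x y : ((ord0, y) \in bridge x) = (x.1 == y).
Proof. by rewrite !inE !xpair_eqE eqxx ord0_max orbF eq_sym. Qed.

Lemma mem_bridge1 x y : ((ord_max, y) \in bridge x) = (x.2 == y).
Proof. by rewrite !inE !xpair_eqE eqxx eq_sym ord0_max eq_sym. Qed.

Lemma bridge_inj : injective bridge.
Proof.
move=> [x1 x2] [y1 y2] /setP Exy.
have := Exy (ord0, x1); have := Exy (ord_max, x2).
by rewrite !mem_bridge0 !mem_bridge1 /= !eqxx => /esym/eqP-> /esym/eqP->.
Qed.

Lemma deg_bridge0 R y : deg (bridge @: R) (ord0, y) = outdeg R y.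
Proof.
rewrite /deg card_imset_sep; last exact: bridge_inj.
by apply: eq_card => x; rewrite [LHS]inE mem_bridge0 inE.
Qed.

Lemma deg_bridge1 R y : deg (bridge @: R) (ord_max, y) = indeg R y.
Proof.
rewrite /deg card_imset_sep; last exact: bridge_inj.
by apply: eq_card => x; rewrite [LHS]inE mem_bridge1 inE.
Qed.

Lemma bridge_neq x : (ord0, x.1) != (ord_max, x.2) :> V.
Proof. by rewrite pair_neq ?ord0_max. Qed.

Lemma ptrans_bridge R : ptrans (bridge @: R) = bridge @: (swap @: R).
Proof.
apply/setP => e; apply/ptransP/imsetP => [[p [q [/imsetP[x Rx Epq] ->]]]|].
  exists (swap x); first exact: imset_f.
  by rewrite (tr_edge_set2 (bridge_neq x) Epq) /tr_edge /bridge setUC.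
case=> _ /imsetP[x Rx ->] ->; exists (ord0, x.1), (ord_max, x.2).
by split; [apply: imset_f | rewrite /tr_edge setUC].
Qed.

Lemma diag_bridge x : diag_edge (bridge x) = (x.1 != x.2).
Proof.
apply/existsP/idP => [[p /existsP[q /and3P[/eqP/esym Epq _ npq]]]|nx].
  by case: (set2_eq_cases (bridge_neq x) Epq) npq => [][-> ->] //; rewrite eq_sym.
exists (ord0, x.1); apply/existsP; exists (ord_max, x.2).
by rewrite eqxx nx andbT.
Qed.

Lemma diag_edge_bridge e : diag_edge e -> exists x, e = bridge x.
Proof.
case/existsP=> [[i y]] /existsP[[j z]] /and3P[/eqP-> /= nij _].
case: (ord2P i) (ord2P j) nij => -> [] -> // _; first by exists (y, z).
by exists (z, y); rewrite /bridge setUC.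
Qed.

Lemma dgraph_bridge k R : dgraph k (bridge @: R) = eulerian k R.
Proof.
rewrite /dgraph /eulerian (card_imset _ bridge_inj).
have -> : simple_graph (bridge @: R).
  by apply/forall_inP => _ /imsetP[x _ ->]; rewrite cards2 bridge_neq.
have -> : [forall e in bridge @: R, diag_edge e] = [forall x, (x, x) \notin R].
  apply/forall_inP/forallP => [diagE x|loopless _ /imsetP[x Rx ->]].
    by apply/negP => Rxx; have := diagE _ (imset_f bridge Rxx); rewrite diag_bridge eqxx.
  rewrite diag_bridge; apply: contraTneq Rx => ex.
  by have := loopless x.1; rewrite {2}ex -surjective_pairing.
have -> : degree_criterion (bridge @: R) = [forall y, outdeg R y == indeg R y].
  apply/forallP/forallP => crit => [y|[i y]].
    by have := crit (ord0, y); rewrite ptrans_bridge !deg_bridge0 outdeg_swap.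
  rewrite ptrans_bridge; case: (ord2P i) => ->.
    by rewrite !deg_bridge0 outdeg_swap.
  by rewrite !deg_bridge1 indeg_swap eq_sym.
by rewrite /= andbCA.
Qed.

Lemma dgraph_bridges k E : dgraph k E -> E = bridge @: [set x | bridge x \in E].
Proof.
case/and4P=> _ _ /forall_inP diagE _; apply/setP => e.
apply/idP/imsetP => [Ee|[x]]; last by rewrite inE => Ex ->.
by have [x Dx] := diag_edge_bridge (diagE _ Ee); exists x; rewrite // inE -Dx.
Qed.

Lemma D_two_rows k : D k 2 b = #|[set R : {set 'I_b * 'I_b} | eulerian k R]|.
Proof.
rewrite D_dgraph -(card_imset _ (imset_inj bridge_inj)); apply: eq_card => E.
rewrite inE; apply/idP/imsetP => [dE|[R]]; last by rewrite inE => eR ->; rewrite dgraph_bridge.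
exists [set x | bridge x \in E]; last exact: dgraph_bridges dE.
by rewrite inE -dgraph_bridge -(dgraph_bridges dE).
Qed.

End TwoRows.

Section DeleteVertex.
Variables (n : nat) (v : 'I_n.+1).
Implicit Types (R : {set 'I_n * 'I_n}) (S : {set 'I_n.+1 * 'I_n.+1}).

Definition lift_arc (x : 'I_n * 'I_n) := (lift v x.1, lift v x.2).

Lemma lift_arc_inj : injective lift_arc.
Proof.
move=> [x1 x2] [y1 y2] /eqP; rewrite xpair_eqE !(inj_eq lift_inj).
by case/andP=> /= /eqP-> /eqP->.
Qed.

Lemma outdeg_lift R y : outdeg (lift_arc @: R) (lift v y) = outdeg R y.
Proof.
rewrite /outdeg card_imset_sep; last exact: lift_arc_inj.
by apply: eq_card => x; rewrite !inE /= (inj_eq lift_inj).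
Qed.

Lemma indeg_lift R y : indeg (lift_arc @: R) (lift v y) = indeg R y.
Proof.
rewrite /indeg card_imset_sep; last exact: lift_arc_inj.
by apply: eq_card => x; rewrite !inE /= (inj_eq lift_inj).
Qed.

Lemma outdeg_lift_pivot R : outdeg (lift_arc @: R) v = 0.
Proof. by apply/eqP/outdeg0P => _ /imsetP[x _ ->]; rewrite eq_sym neq_lift. Qed.

Lemma indeg_lift_pivot R : indeg (lift_arc @: R) v = 0.
Proof. by apply/eqP/indeg0P => _ /imsetP[x _ ->]; rewrite eq_sym neq_lift. Qed.

Lemma eulerian_lift k R : eulerian k (lift_arc @: R) = eulerian k R.
Proof.
have mem_lift x : (lift_arc x \in lift_arc @: R) = (x \in R) := mem_imset _ _ lift_arc_inj.
rewrite /eulerian (card_imset _ lift_arc_inj); congr [&& _, _ & _].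
  apply/forallP/forallP => loopless x.
    by have := loopless (lift v x); rewrite -[(lift v x, _)]/(lift_arc (x, x)) mem_lift.
  case: (unliftP v x) => [y ->|->].
    by rewrite -[(lift v y, _)]/(lift_arc (y, y)) mem_lift.
  by apply/negP => /imsetP[y _ /(congr1 fst) /= /eqP]; rewrite (negbTE (neq_lift _ _)).
apply/forallP/forallP => balanced x.
  by have := balanced (lift v x); rewrite outdeg_lift indeg_lift.
case: (unliftP v x) => [y ->|->]; first by rewrite outdeg_lift indeg_lift.
by rewrite outdeg_lift_pivot indeg_lift_pivot.
Qed.

Lemma lift_isolated S : outdeg S v = 0 -> indeg S v = 0 ->
  S = lift_arc @: [set x | lift_arc x \in S].
Proof.
move=> /eqP/outdeg0P out0 /eqP/indeg0P in0; apply/setP => p.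
apply/idP/imsetP => [Sp|[x]]; last by rewrite inE => ? ->.
have /unlift_some[y1 Dp1 _] : v != p.1 by rewrite eq_sym out0.
have /unlift_some[y2 Dp2 _] : v != p.2 by rewrite eq_sym in0.
by exists (y1, y2); rewrite ?inE /lift_arc /= -Dp1 -Dp2 -surjective_pairing.
Qed.

End DeleteVertex.

Definition eul_count k n (A : {set 'I_n}) :=
  #|[set R : {set 'I_n * 'I_n} | eulerian k R && [forall x in A, 0 < outdeg R x]]|.

Definition eul_full k n := eul_count k [set: 'I_n].

Lemma eul_count_isolated k n (B : {set 'I_n.+1}) v : v \notin B ->
  #|[set S | [&& eulerian k S, [forall x in B, 0 < outdeg S x] & outdeg S v == 0]]|
  = eul_count k (lift v @^-1: B).
Proof.
move=> vB; rewrite /eul_count -[RHS](card_imset _ (imset_inj (@lift_arc_inj _ v))).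
apply: eq_card => S; rewrite inE; apply/and3P/imsetP => [[eS covB /eqP out0]|[R]].
  have in0 : indeg S v = 0 by case/and3P: eS => _ _ /forallP/(_ v)/eqP<-.
  move: eS covB; rewrite (lift_isolated out0 in0) => eS covB.
  exists [set x | lift_arc v x \in S]; rewrite // inE -(eulerian_lift v) eS.
  by apply/forall_inP => y; rewrite inE => /(forall_inP covB); rewrite outdeg_lift.
rewrite inE => /andP[eR covA] ->; split; rewrite ?eulerian_lift ?outdeg_lift_pivot //.
apply/forall_inP => x; case: (unliftP v x) => [y ->|->]; last by rewrite (negbTE vB).
by rewrite outdeg_lift => By; apply: (forall_inP covA); rewrite inE.
Qed.

Lemma eul_count_split k n (B : {set 'I_n.+1}) v : v \notin B ->
  eul_count k B = eul_count k (v |: B) + eul_count k (lift v @^-1: B).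
Proof.
move=> vB; rewrite -eul_count_isolated // /eul_count.
rewrite -[LHS](cardsID [set S | 0 < outdeg S v]); congr (_ + _); apply: eq_card => S.
  rewrite !inE -andbA; congr (_ && _); apply/andP/forall_inP => [[covB outv] x|covvB].
    by case/setU1P=> [->|]; last apply: (forall_inP covB).
  by split; [apply/forall_inP => x Bx|]; apply: covvB; rewrite !inE ?Bx ?orbT ?eqxx.
by rewrite !inE lt0n negbK andbC -andbA.
Qed.

Lemma eul_full_gt k n : k < n -> eul_full k n = 0.
Proof.
move=> lt_kn; apply: eq_card0 => S; rewrite !inE.
apply/negP => /andP[/and3P[_ /eqP cardS _] /forall_inP covT].
have : [set: 'I_n] \subset [set p.1 | p in S].
  apply/subsetP => x /covT /card_gt0P[p]; rewrite inE => /andP[Sp /eqP <-].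
  exact: imset_f.
move/subset_leq_card/leq_trans/(_ (leq_imset_card _ _)).
by rewrite cardsT card_ord cardS leqNgt lt_kn.
Qed.

Lemma sum_binS k m (f : nat -> nat) : f k.+1 = 0 ->
  \sum_(t < k.+1) 'C(m.+1, t) * f t =
  \sum_(t < k.+1) 'C(m, t) * f t + \sum_(t < k.+1) 'C(m, t) * f t.+1.
Proof.
move=> fk; rewrite [X in _ = _ + X]big_ord_recr /= fk muln0 addn0.
rewrite [LHS]big_ord_recl [X in _ = X + _]big_ord_recl !bin0 -addnA -big_split /=.
by congr (_ + _); apply: eq_bigr => t _; rewrite binS mulnDl.
Qed.

Lemma eul_count_binomial k m n (A : {set 'I_n}) : #|A| + m = n ->
  eul_count k A = \sum_(t < k.+1) 'C(m, t) * eul_full k (#|A| + t).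
Proof.
elim: m n A => [|m IHm] n A cardA.
  rewrite big_ord_recl big1 => [|t _]; last by rewrite bin0n.
  rewrite addn0 in cardA.
  have eA : A = [set: 'I_n] by apply/eqP; rewrite eqEcard subsetT cardsT card_ord cardA /=.
  by rewrite eA cardsT card_ord addn0 mul1n addn0.
case: n A cardA => [|n] A cardA; first by rewrite addnS in cardA.
have /card_gt0P[v] : 0 < #|~: A| by have := cardsC A; rewrite card_ord; lia.
rewrite inE => vA.
have card_lift : #|lift v @^-1: A| = #|A|.
  rewrite -(card_imset _ (@lift_inj _ v)); apply: eq_card => x.
  apply/imsetP/idP => [[y]|Ax]; first by rewrite inE => Ay ->.
  have /unlift_some[y Dx _] : v != x by apply: contraNneq vA => ->.
  by exists y; rewrite // inE -Dx.
rewrite (eul_count_split k vA) (IHm _ (v |: A)) ?(IHm _ (lift v @^-1: A)) ?card_lift.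
- rewrite (@sum_binS k m (fun t => eul_full k (#|A| + t))); last by apply: eul_full_gt; lia.
  rewrite [LHS]addnC; congr (_ + _); apply: eq_bigr => t _.
  by rewrite cardsU1 vA add1n addSn addnS.
- by move: cardA; rewrite addnS => -[].
- by rewrite cardsU1 vA add1n addSn -addnS.
Qed.

Lemma card_eulerian k n :
  #|[set R : {set 'I_n * 'I_n} | eulerian k R]| = \sum_(t < k.+1) 'C(n, t) * eul_full k t.
Proof.
transitivity (eul_count k (set0 : {set 'I_n})).
  apply: eq_card => R; rewrite !inE; suff -> : [forall x in set0, 0 < outdeg R x] by rewrite andbT.
  by apply/forall_inP => x; rewrite inE.
by rewrite (@eul_count_binomial k n) cards0.
Qed.

(* Cardinals of finite sets go through locked definitions and do not compute, so [eul_full] is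
   recounted over bit strings: [bits_of R] lists the adjacency matrix of [R] row by row. *)
Fixpoint bitseqs N : seq (seq bool) :=
  if N is N'.+1 then [seq true :: s | s <- bitseqs N'] ++ [seq false :: s | s <- bitseqs N']
  else [:: [::]].

Lemma mem_bitseqs N s : (s \in bitseqs N) = (size s == N).
Proof.
elim: N s => [|N IHN] [|c s] //=; rewrite mem_cat.
  by apply/orP => -[] /mapP[].
have mem_cons c' L : (c :: s \in [seq c' :: t | t <- L]) = (c == c') && (s \in L).
  by apply/mapP/andP => [[t tL [-> ->]]|[/eqP-> sL]]; [rewrite eqxx | exists s].
by rewrite !mem_cons {mem_cons} eqSS -IHN; case: c; case: (s \in bitseqs N).
Qed.

Lemma uniq_bitseqs N : uniq (bitseqs N).
Proof.
elim: N => //= N IHN; rewrite cat_uniq !map_inj_uniq ?IHN //= => [|? ? []//|? ? []//].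
by rewrite andbT; apply/hasPn => _ /mapP[s _ ->]; apply/mapP => -[].
Qed.

Section BitEncoding.
Variable m : nat.
Notation n := m.+1.
Notation T := ('I_n * 'I_n)%type.
Implicit Types (R : {set T}) (s : seq bool).

Definition bits_of R : seq bool :=
  mkseq (fun i => ((inord (i %/ n), inord (i %% n)) : T) \in R) (n * n).

Definition rel_of_bits s : {set T} := [set x : T | nth false s (x.1 * n + x.2)].

Lemma size_bits_of R : size (bits_of R) = n * n.
Proof. exact: size_mkseq. Qed.

Lemma index_lt (x : T) : x.1 * n + x.2 < n * n.
Proof. by case: x => [[i lt_i] [j lt_j]] /=; nia. Qed.

Lemma nth_bits_of R (x : T) : nth false (bits_of R) (x.1 * n + x.2) = (x \in R).
Proof.
rewrite nth_mkseq ?index_lt // divnMDl // divn_small // addn0 modnMDl modn_small //.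
by rewrite !inord_val -surjective_pairing.
Qed.

Lemma bits_ofK : cancel bits_of rel_of_bits.
Proof. by move=> R; apply/setP => x; rewrite inE nth_bits_of. Qed.

Lemma rel_of_bitsK s : size s = n * n -> bits_of (rel_of_bits s) = s.
Proof.
move=> size_s; rewrite /bits_of -[in RHS](mkseq_nth false s) size_s.
apply/eq_in_map => i; rewrite mem_iota inE /= => lt_i.
by rewrite !inordK -?divn_eq // ?ltn_pmod // ltn_divLR.
Qed.

Lemma card_bits (P : pred {set T}) (Pb : pred (seq bool)) :
  (forall R, P R = Pb (bits_of R)) -> #|[set R | P R]| = count Pb (bitseqs (n * n)).
Proof.
move=> PE; rewrite -size_filter -(size_map rel_of_bits).
have /card_uniqP <- : uniq [seq rel_of_bits s | s <- bitseqs (n * n) & Pb s].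
  rewrite map_inj_in_uniq ?filter_uniq ?uniq_bitseqs // => s1 s2.
  rewrite !mem_filter !mem_bitseqs => /andP[_ /eqP/rel_of_bitsK E1] /andP[_ /eqP/rel_of_bitsK E2].
  by move=> E; rewrite -E1 -E2 E.
apply: eq_card => R; rewrite inE; apply/idP/mapP => [PR|[s]].
  exists (bits_of R); last by rewrite bits_ofK.
  by rewrite mem_filter -PE PR mem_bitseqs size_bits_of eqxx.
by rewrite mem_filter mem_bitseqs => /andP[Pbs /eqP/rel_of_bitsK sK] ->; rewrite PE sK.
Qed.

Definition bit s i j := nth false s (i * n + j).
Definition bit_outdeg s i := sumn [seq (bit s i j : nat) | j <- iota 0 n].
Definition bit_indeg s j := sumn [seq (bit s i j : nat) | i <- iota 0 n].

Definition eul_full_bits k s :=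
  [&& all (fun i => ~~ bit s i i) (iota 0 n),
      sumn [seq bit_outdeg s i | i <- iota 0 n] == k
    & all (fun i => bit_outdeg s i == bit_indeg s i) (iota 0 n)]
  && all (fun i => 0 < bit_outdeg s i) (iota 0 n).

Lemma bit_bits_of R i j : i < n -> j < n -> bit (bits_of R) i j = ((inord i, inord j) \in R).
Proof. by move=> lt_i lt_j; rewrite /bit -nth_bits_of /= !inordK. Qed.

Lemma big_ord_iota (F : 'I_n -> nat) :
  \sum_(x < n) F x = sumn [seq F (inord i) | i <- iota 0 n].
Proof.
rewrite sumnE big_map (_ : iota 0 n = index_iota 0 n) ?big_mkord; last by rewrite /index_iota subn0.
by apply: eq_bigr => x _; rewrite inord_val.
Qed.

Lemma forall_iota (P : pred 'I_n) : [forall x, P x] = all (fun i => P (inord i)) (iota 0 n).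
Proof.
apply/forallP/allP => [P_all i _|P_iota x]; first exact: P_all.
by have := P_iota x; rewrite mem_iota ltn_ord inord_val; apply.
Qed.

Lemma outdeg_bits R i : i < n -> outdeg R (inord i) = bit_outdeg (bits_of R) i.
Proof.
move=> lt_i; rewrite outdeg_sum big_ord_iota; congr sumn.
by apply/eq_in_map => j; rewrite mem_iota => /andP[_ lt_j]; rewrite bit_bits_of.
Qed.

Lemma indeg_bits R j : j < n -> indeg R (inord j) = bit_indeg (bits_of R) j.
Proof.
move=> lt_j; rewrite indeg_sum big_ord_iota; congr sumn.
by apply/eq_in_map => i; rewrite mem_iota => /andP[_ lt_i]; rewrite bit_bits_of.
Qed.

Lemma eul_fullE k R :
  eulerian k R && [forall x in [set: 'I_n], 0 < outdeg R x] = eul_full_bits k (bits_of R).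
Proof.
have iotaP (P : nat -> bool) (Q : nat -> bool) : {in gtn n, P =1 Q} ->
    all P (iota 0 n) = all Q (iota 0 n).
  by move=> PQ; apply/eq_in_all => i; rewrite mem_iota => /andP[_ /PQ].
rewrite /eulerian /eul_full_bits card_outdeg_sum big_ord_iota !forall_iota.
congr ([&& _, (sumn _ == k) & _] && _).
- by apply: iotaP => i lt_i; rewrite bit_bits_of.
- by apply/eq_in_map => i; rewrite mem_iota => /andP[_ lt_i]; rewrite outdeg_bits.
- by apply: iotaP => i lt_i; rewrite outdeg_bits ?indeg_bits.
- by apply: iotaP => i lt_i; rewrite inE outdeg_bits.
Qed.

Lemma eul_full_count k : eul_full k n = count (eul_full_bits k) (bitseqs (n * n)).
Proof. exact: card_bits (eul_fullE k). Qed.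

End BitEncoding.

Lemma eul_full0 k : 0 < k -> eul_full k 0 = 0.
Proof.
move=> k_gt0; apply: eq_card0 => R; rewrite !inE; apply/negP => /andP[/and3P[_ /eqP cardR _] _].
by have := max_card R; rewrite card_prod card_ord cardR leqNgt k_gt0.
Qed.

Lemma eul_full3 : [/\ eul_full 3 1 = 0, eul_full 3 2 = 0 & eul_full 3 3 = 2].
Proof. by split; rewrite eul_full_count; vm_compute. Qed.

Lemma eul_full4 : [/\ eul_full 4 1 = 0, eul_full 4 2 = 0, eul_full 4 3 = 3 & eul_full 4 4 = 9].
Proof. by split; rewrite eul_full_count; vm_compute. Qed.

Theorem mainTheorem17 (a b : nat) (ha : 2 <= a) (hb : 2 <= b) :
  [/\ D 2 a b = 'C(a, 2) * 'C(b, 2),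
      D 3 2 b = 2 * 'C(b, 3)
    & D 4 2 b = 3 * 'C(b, 3) + 9 * 'C(b, 4)].
Proof.
have [f31 f32 f33] := eul_full3; have [f41 f42 f43 f44] := eul_full4.
split; first exact: D2_eq.
  rewrite D_two_rows card_eulerian !big_ord_recl big_ord0 /= eul_full0 // f31 f32 f33.
  by rewrite !muln0 !add0n addn0 mulnC.
rewrite D_two_rows card_eulerian !big_ord_recl big_ord0 /= eul_full0 // f41 f42 f43 f44.
by rewrite !muln0 !add0n addn0 (mulnC 3) (mulnC 9).
Qed.
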